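(* For every $k\ge 3$ there exists a root $\lambda\in\mathbb{C}$ of the matching polynomial $\varphi(\mathrm{COMB}_k)$ such that $\lambda^k\notin\mathbb{R}$.
   Context: The $k$-comb $\mathrm{COMB}_k$ is the $k$-uniform hypergraph with vertex set $[k^2]$ and edge set consisting of the edge $[k]=\{1,\dots,k\}$ together with the $k$ edges $\{i+tk: 0\le t\le k-1\}$ for $i\in[k]$. A $t$-matching of a $k$-uniform hypergraph $H$ is a set of $t$ pairwise disjoint edges. The matching polynomial is $\varphi(H)=\sum_{i=0}^{m}(-1)^i|\mathcal{M}_i|\,x^{(m-i)k}$, where $\mathcal{M}_i$ is the set of $i$-matchings of $H$ and $m$ is the maximum size of a matching in $H$. (The paper phrases the conclusion as $\lambda\notin\mathbb{R}[\zeta_k]$, meaning $\lambda$ is not a $k$-th root of a real number.) *)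

From HB Require Import structures.
From mathcomp Require Import all_boot all_order all_algebra all_field.
Set Implicit Arguments. Unset Strict Implicit. Unset Printing Implicit Defensive.
Import Order.TTheory GRing.Theory Num.Theory.

Definition is_matching (T : finType) (E : {set {set T}}) (M : {set {set T}}) : bool :=
  (M \subset E) &&
  [forall e1 in M, forall e2 in M, (e1 != e2) ==> [disjoint e1 & e2]].

Definition matchings (T : finType) (E : {set {set T}}) (t : nat) : {set {set {set T}}} :=
  [set M : {set {set T}} | is_matching E M & #|M| == t].

Definition max_matching (T : finType) (E : {set {set T}}) : nat :=
  \max_(M : {set {set T}} | is_matching E M) #|M|.

Local Open Scope ring_scope.

Definition matching_poly (R : nzRingType) (k : nat) (T : finType)
    (E : {set {set T}}) : {poly R} :=
  let m := max_matching E in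
  \sum_(i < m.+1) (((-1) ^+ i * (#|matchings E i|)%:R) *: 'X^((m - i) * k)%N).

(* The k-comb on vertex set [k^2], encoded 0-based as 'I_(k*k) (vertex v
   corresponds to v+1): spine {0,...,k-1} (i.e. [k]) and, for each i < k,
   the tooth {i + t k : 0 <= t <= k-1}. *)
Definition comb_edges (k : nat) : {set {set 'I_(k * k)}} :=
  [set [set v : 'I_(k * k) | (val v < k)%N]] :|:
  [set [set v : 'I_(k * k) | [exists t : 'I_k, val v == (val i + t * k)%N]]
     | i : 'I_k].

From HB Require Import structures.
From mathcomp Require Import all_boot all_order all_algebra all_field.
From mathcomp Require Import ring zify.

(* A matching of the comb is either the spine alone or a set of teeth, so
   #|M_t| = 'C(k, t) + [t == 1] and, with y = x^k, the matching polynomial is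
   (y - 1)^k - y^(k-1).  If w is a root of X^k + X - 1, then y = 1/(1 - w) is
   a root of it, because y - 1 = w y and w^k = 1 - w.  For k >= 3 the trinomial
   X^k + X - 1 has a nonreal root w: its roots sum to 0 and their squares sum
   to -2[k == 3] <= 0, which is impossible for nonzero reals.  Then y is
   nonreal, and any k-th root of y is the required root. *)

Set Implicit Arguments. Unset Strict Implicit. Unset Printing Implicit Defensive.
Import Order.TTheory GRing.Theory Num.Theory.

Section Comb.

Variable k : nat.

Definition spine : {set 'I_(k * k)} := [set v | val v < k].

Definition tooth (i : 'I_k) : {set 'I_(k * k)} :=
  [set v | [exists t : 'I_k, val v == i + t * k]].

Definition teeth : {set {set 'I_(k * k)}} := [set tooth i | i : 'I_k].

Lemma comb_edgesE : comb_edges k = spine |: teeth.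
Proof. by []. Qed.

Lemma mem_tooth (i : 'I_k) v : (v \in tooth i) = (val v %% k == i).
Proof.
rewrite inE; apply/existsP/eqP => [[t /eqP ->] | vi].
  by rewrite addnC modnMDl modn_small.
have v_div_lt : val v %/ k < k.
  by rewrite ltn_divLR ?ltn_ord // (leq_ltn_trans _ (ltn_ord i)).
by exists (Ordinal v_div_lt); rewrite /= -vi addnC -divn_eq.
Qed.

Lemma base_vertex_subproof (i : 'I_k) : i < k * k.
Proof.
by rewrite (leq_trans (ltn_ord i)) // leq_pmulr // (leq_ltn_trans _ (ltn_ord i)).
Qed.

Definition base_vertex (i : 'I_k) : 'I_(k * k) := Ordinal (base_vertex_subproof i).

Lemma base_vertex_tooth (i : 'I_k) : base_vertex i \in tooth i.
Proof. by rewrite mem_tooth /= modn_small. Qed.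

Lemma base_vertex_spine (i : 'I_k) : base_vertex i \in spine.
Proof. by rewrite inE /=. Qed.

Lemma tooth_inj : injective tooth.
Proof.
move=> i j ij; have := base_vertex_tooth i.
by rewrite ij mem_tooth /= modn_small // => /eqP/val_inj.
Qed.

Lemma disjoint_tooth (i j : 'I_k) : i != j -> [disjoint tooth i & tooth j].
Proof.
move=> ij; apply/pred0P => v /=; rewrite !mem_tooth.
by apply: contraNF ij => /andP[/eqP vi /eqP vj]; apply/eqP/val_inj; rewrite /= -vi -vj.
Qed.

Lemma spine_meets_tooth (i : 'I_k) : ~~ [disjoint spine & tooth i].
Proof.
by apply/negP => /disjointFr /(_ (base_vertex_spine i)); rewrite base_vertex_tooth.
Qed.

Lemma spine_notin_teeth : 1 < k -> spine \notin teeth.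
Proof.
move=> k_gt1; apply/imsetP => -[i _ spine_tooth].
have ik_lt : i + k < k * k by rewrite (@leq_trans (k + k)) ?ltn_add2r //; nia.
have : Ordinal ik_lt \in tooth i by rewrite mem_tooth /= modnDr modn_small.
by rewrite -spine_tooth inE /= ltnNge leq_addl.
Qed.

Lemma card_teeth : #|teeth| = k.
Proof. by rewrite card_imset ?card_ord //; apply: tooth_inj. Qed.

Lemma is_matching_comb (M : {set {set 'I_(k * k)}}) :
  is_matching (comb_edges k) M = (M == [set spine]) || (M \subset teeth).
Proof.
rewrite /is_matching comb_edgesE; apply/andP/orP => [[M_sub M_disj] | ].
  case: (boolP (spine \in M)) => [spine_M | spine_nM]; [left | right].
    rewrite eqEsubset sub1set spine_M andbT; apply/subsetP => e eM.
    rewrite inE; apply: contraT => e_neq.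
    have /setU1P[/eqP e_spine | /imsetP[i _ e_tooth]] := subsetP M_sub e eM.
      by rewrite e_spine in e_neq.
    move/forallP/(_ spine): M_disj; rewrite spine_M => /forallP/(_ e).
    by rewrite eM eq_sym e_neq e_tooth (negbTE (spine_meets_tooth i)).
  apply/subsetP => e eM; have /setU1P[e_spine |] // := subsetP M_sub e eM.
  by rewrite -e_spine eM in spine_nM.
case=> [/eqP -> | M_teeth]; split.
- by rewrite sub1set setU11.
- by apply/forall_inP => e1 /set1P -> ; apply/forall_inP => e2 /set1P ->; rewrite eqxx.
- exact: subset_trans M_teeth (subsetUr _ _).
apply/forall_inP => _ /(subsetP M_teeth) /imsetP[i _ ->].
apply/forall_inP => _ /(subsetP M_teeth) /imsetP[j _ ->].
by apply/implyP => tooth_ij; apply: disjoint_tooth; apply: contraNneq tooth_ij => ->.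
Qed.

Hypothesis k_gt1 : 1 < k.

Lemma max_matching_comb : max_matching (comb_edges k) = k.
Proof.
apply/eqP; rewrite eqn_leq; apply/andP; split.
  apply/bigmax_leqP => M; rewrite is_matching_comb => /orP[/eqP -> | M_teeth].
    by rewrite cards1 ltnW.
  by rewrite -[X in _ <= X]card_teeth subset_leq_card.
rewrite -[X in X <= _]card_teeth; apply: (bigop.bigmax_sup teeth) => //.
by rewrite is_matching_comb subxx orbT.
Qed.

Lemma card_matchings_comb (t : nat) :
  #|matchings (comb_edges k) t| = (t == 1) + 'C(k, t).
Proof.
set spine_matching := [set M : {set {set 'I_(k * k)}} | (M == [set spine]) && (t == 1)].
set teeth_matchings := [set M : {set {set 'I_(k * k)}} | M \subset teeth & #|M| == t].
have -> : matchings (comb_edges k) t = spine_matching :|: teeth_matchings.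
  apply/setP => M; rewrite !inE is_matching_comb andb_orl; congr (_ || _).
  by case: eqP => //= ->; rewrite cards1 eq_sym.
rewrite cardsU; have -> : spine_matching :&: teeth_matchings = set0.
  apply/setP => M; rewrite !inE; case: eqP => //= ->.
  by rewrite sub1set (negbTE (spine_notin_teeth k_gt1)) andbF.
rewrite cards0 subn0 cards_draws card_teeth; congr (_ + _).
rewrite /spine_matching; case: (t == 1).
  by apply: (@eq_card1 _ [set spine]) => M; rewrite !inE andbT.
by apply: eq_card0 => M; rewrite !inE andbF.
Qed.

End Comb.

Local Open Scope ring_scope.

Lemma coefPn2_prod_XsubC (R : comNzRingType) (s : seq R) : (1 < size s)%N ->
  2%:R * (\prod_(z <- s) ('X - z%:P))`_(size s).-2
    = (\sum_(z <- s) z) ^+ 2 - \sum_(z <- s) z ^+ 2.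
Proof.
elim: s => [|a s IHs] //; rewrite !big_cons mulrBl coefB coefXM coefCM.
case: s IHs => [|b [|c s]] // IHs _ /=.
  by rewrite !big_cons !big_nil mulr1 coefB coefX coefC /=; ring.
have := coefPn_prod_XsubC (isT : size [:: b, c & s] != 0%N).
rewrite /= in IHs * => e1; rewrite mulrBr {}IHs // e1; ring.
Qed.

Lemma sumr_sqr_gt0 (R : numDomainType) (s : seq R) :
  {in s, forall z, z \is Num.real} -> has (fun z => z != 0) s ->
  0 < \sum_(z <- s) z ^+ 2.
Proof.
elim: s => [|a s IHs] //= s_real; rewrite big_cons.
have a_sqr_ge0 : 0 <= a ^+ 2 by rewrite -realEsqr s_real ?mem_head.
have {}s_real : {in s, forall z, z \is Num.real}.
  by move=> z zs; rewrite s_real // inE zs orbT.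
case/orP=> [a_neq0 | /(IHs s_real) s_gt0]; last exact: ltr_wpDl.
rewrite ltr_pwDl ?lt_def ?sqrf_eq0 ?a_neq0 // big_seq sumr_ge0 // => z zs.
by rewrite -realEsqr s_real.
Qed.

Lemma monic_nonreal_root (C : numClosedFieldType) (p : {poly C}) (n : nat) :
  p \is monic -> size p = n.+3 -> p`_n.+1 = 0 -> 0 <= p`_n -> p`_0 != 0 ->
  exists2 z, root p z & z \notin Num.real.
Proof.
move=> p_monic size_p p_sub1 p_sub2 p0_neq0.
have [rs def_p] := closed_field_poly_normal p.
rewrite (monicP p_monic) scale1r in def_p.
have size_rs : size rs = n.+2 by apply/succn_inj; rewrite -size_p def_p size_prod_XsubC.
case/boolP: (all (fun z => z \is Num.real) rs) => [/allP rs_real |]; last first.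
  by case/allPn => z z_rs z_nreal; exists z; rewrite // def_p root_prod_XsubC.
have sum_rs : \sum_(z <- rs) z = 0.
  by apply/eqP; rewrite -oppr_eq0 -coefPn_prod_XsubC size_rs // -def_p p_sub1.
have := @coefPn2_prod_XsubC _ rs.
rewrite -def_p size_rs sum_rs expr0n sub0r => /(_ isT) sum_sqr.
have rs_neq0 : has (fun z => z != 0) rs.
  case: rs size_rs def_p {rs_real sum_rs sum_sqr} => [|z rs] //= _ def_p.
  apply/orP; left; apply: contraNneq p0_neq0 => z0.
  by rewrite -horner_coef0 -[X in p.[X]]z0 -/(root p z) def_p root_prod_XsubC mem_head.
have := mulr_ge0 (ler0n C 2) p_sub2; rewrite sum_sqr oppr_ge0.
by rewrite lt_geF // (@sumr_sqr_gt0 C rs).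
Qed.

Lemma XnDXsub1_nonreal_root (C : numClosedFieldType) (k : nat) : (3 <= k)%N ->
  exists2 w : C, root ('X^k + 'X - 1) w & w \notin Num.real.
Proof.
case: k => [|[|[|n]]] // _; rewrite -addrA.
have size_p : size ('X^(n.+3) + ('X - 1) : {poly C}) = n.+4.
  by rewrite size_polyDl ?size_polyXn // size_XsubC.
apply: (monic_nonreal_root (n := n.+1)) => //.
- by rewrite monicE lead_coefDl ?lead_coefXn // size_polyXn size_XsubC.
- by rewrite coefD coefXn coefB coefX coef1 ltn_eqF //= subr0 addr0.
- by rewrite coefD coefXn coefB coefX coef1 ltn_eqF //= subr0 add0r ler0n.
- by rewrite coefD coefXn coefB coefX coef1 /= !add0r oppr_eq0 oner_eq0.
Qed.

Lemma matching_poly_comb (R : comNzRingType) (k : nat) : (1 < k)%N ->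
  matching_poly R k (comb_edges k) = ('X^k - 1) ^+ k - 'X^((k - 1) * k).
Proof.
move=> k_gt1; rewrite /matching_poly max_matching_comb //.
under eq_bigr => i _ do rewrite card_matchings_comb // natrD mulrDr scalerDl.
rewrite big_split /= addrC; congr (_ + _).
  rewrite exprDn; apply: eq_bigr => i _.
  rewrite -exprM mulnC -mul_polyC rmorphM rmorphXn rmorphN1 /= polyC_natr.
  by rewrite -mulr_natr; ring.
case: k k_gt1 => [|[|k]] // _; rewrite 2!big_ord_recl big1 => [|i _]; last first.
  by rewrite mulr0 scale0r.
by rewrite /= mulr0 scale0r expr1 mulr1 scaleN1r add0r addr0 subn1.
Qed.

Lemma root_matching_poly_comb (C : numClosedFieldType) (k : nat) (w lam : C) :
  (1 < k)%N -> root ('X^k + 'X - 1) w -> lam ^+ k = (1 - w)^-1 ->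
  root (matching_poly C k (comb_edges k)) lam.
Proof.
move=> k_gt1 /rootP; rewrite !hornerE => w_root lam_k.
have wk : w ^+ k = 1 - w by apply/eqP; rewrite -subr_eq0 -w_root; apply/eqP; ring.
have u_neq0 : 1 - w != 0.
  apply/eqP => u0; move/eqP: wk; rewrite u0 expf_eq0 (ltnW k_gt1) /= => /eqP w0.
  by move/eqP: u0; rewrite w0 subr0 oner_eq0.
apply/rootP; rewrite matching_poly_comb // !hornerE mulnC exprM lam_k.
have -> : (1 - w)^-1 - 1 = w * (1 - w)^-1 by field.
rewrite exprMn wk -(prednK (ltnW k_gt1)) exprS subn1 /= mulrA mulfV //.
by rewrite mul1r exprVn subrr.
Qed.

Theorem mainTheorem6 (k : nat) (hk : (3 <= k)%N) :
  exists lam : algC,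
    root (matching_poly algC k (comb_edges k)) lam /\ lam ^+ k \notin Num.real.
Proof.
have k_gt1 : (1 < k)%N := ltnW hk.
have [w w_root w_nreal] := XnDXsub1_nonreal_root algC hk.
exists (k.-root (1 - w)^-1); rewrite rootCK ?(ltnW k_gt1) //; split.
  by apply: (root_matching_poly_comb k_gt1 w_root); rewrite rootCK ?(ltnW k_gt1).
rewrite realV; apply: contra w_nreal => u_real.
by rewrite -(subKr 1 w) rpredB ?rpred1.
Qed.
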